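(* Let $G=(V,E)$ be a directed acyclic graph under the LT model with edge weights $w$ satisfying $\sum_{x\in\mathrm{In}(v)}w_{(x,v)}\le1$ for every $v\in V$, and let $L$ be the length of a longest directed path in $G$. Taking $p_{(x,y)}=w_{(x,y)}$ in the EaSyIM recursion, for every $l\ge L$ and every $u\in V$ the EaSyIM score satisfies $\Delta^l(u)=\sigma(\{u\})$; equivalently, $\sigma(\{u\})=\sum_{\rho}\prod_{e\in\rho}w_e$, the sum ranging over all directed paths $\rho$ of length at least $1$ starting at $u$.
   Context: LT model: each node $v$ draws a threshold $\theta_v$ uniformly from $[0,1]$; seeds are active initially, and an inactive $v$ becomes active once $\sum_{u\in\mathrm{In}(v),\,u\text{ active}}w_{(u,v)}\ge\theta_v$; active nodes stay active. $\sigma(S)$ denotes the expected number of active nodes at the end of the process that are not in $S$. EaSyIM score: $\Delta^0(u)=0$ for all $u$, and for $i\ge1$, $\Delta^i(u)=\sum_{v\in\mathrm{Out}(u)}p_{(u,v)}\big(1+\Delta^{i-1}(v)\big)$, where $\mathrm{Out}(u)$ is the set of out-neighbours of $u$ and $\mathrm{In}(v)$ the set of in-neighbours of $v$. *)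

From Stdlib Require Import Reals List Arith Bool.
Import ListNotations.
Open Scope R_scope.

(* Graph G = (V,E): vertices are 0..n-1, edges given by a boolean relation
   E on nat (assumed to stay inside V), weights w : nat -> nat -> R. *)

Definition lsum (f : nat -> R) (l : list nat) : R :=
  fold_right (fun x acc => f x + acc) 0 l.

Definition verts (n : nat) : list nat := seq 0 n.

(* x :: p is a directed path (walk) x -> p1 -> p2 -> ...; its length is
   length p *)
Fixpoint is_pathb (E : nat -> nat -> bool) (x : nat) (p : list nat) : bool :=
  match p with
  | nil => true
  | y :: p' => E x y && is_pathb E y p'
  end.

Definition acyclic (E : nat -> nat -> bool) : Prop :=
  forall x p, p <> nil -> is_pathb E x p = true -> last p x <> x.

Definition longest_path_length (E : nat -> nat -> bool) (L : nat) : Prop :=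
  (exists x p, is_pathb E x p = true /\ length p = L) /\
  (forall x p, is_pathb E x p = true -> (length p <= L)%nat).

Fixpoint path_weight (w : nat -> nat -> R) (x : nat) (p : list nat) : R :=
  match p with
  | nil => 1
  | y :: p' => w x y * path_weight w y p'
  end.

Fixpoint all_lists (n k : nat) : list (list nat) :=
  match k with
  | O => [nil]
  | S k' => flat_map (fun v => map (fun p => v :: p) (all_lists n k')) (verts n)
  end.

Definition lsumL (f : list nat -> R) (l : list (list nat)) : R :=
  fold_right (fun x acc => f x + acc) 0 l.

Definition path_sum (n : nat) (E : nat -> nat -> bool) (w : nat -> nat -> R)
  (L u : nat) : R :=
  lsum (fun k => lsumL (fun p => if is_pathb E u p then path_weight w u p else 0)
                       (all_lists n k)) (seq 1 L).

Fixpoint easyim (n : nat) (E : nat -> nat -> bool) (p : nat -> nat -> R)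
  (i u : nat) : R :=
  match i with
  | O => 0
  | S i' => lsum (fun v => if E u v then p u v * (1 + easyim n E p i' v) else 0)
                 (verts n)
  end.

Definition in_active_weight (n : nat) (E : nat -> nat -> bool) (w : nat -> nat -> R)
  (act : nat -> bool) (v : nat) : R :=
  lsum (fun u => if E u v && act u then w u v else 0) (verts n).

Fixpoint lt_active (n : nat) (E : nat -> nat -> bool) (w : nat -> nat -> R)
  (theta : nat -> R) (seed : nat -> bool) (k : nat) : nat -> bool :=
  match k with
  | O => seed
  | S k' => fun v =>
      lt_active n E w theta seed k' v ||
      (if Rle_dec (theta v) (in_active_weight n E w (lt_active n E w theta seed k') v)
       then true else false)
  end.

(* number of nodes active at the end (n rounds suffice: the active set is
   monotone and has at most n elements) that are not seeds *)
Definition lt_spread (n : nat) (E : nat -> nat -> bool) (w : nat -> nat -> R)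
  (seed : nat -> bool) (theta : nat -> R) : R :=
  lsum (fun v => if lt_active n E w theta seed n v && negb (seed v) then 1 else 0)
       (verts n).

(* sum of F g over all g : {0..m-1} -> {0..N-1} (g is 0 outside) *)
Fixpoint grid_sum (N m : nat) (F : (nat -> nat) -> R) : R :=
  match m with
  | O => F (fun _ => O)
  | S m' => grid_sum N m' (fun g =>
              lsum (fun k => F (fun v => if Nat.eqb v m' then k else g v)) (seq 0 N))
  end.

(* midpoint Riemann sum, mesh 1/N, of F over the cube [0,1]^n *)
Definition cube_riemann (n N : nat) (F : (nat -> R) -> R) : R :=
  grid_sum N n (fun g => F (fun v => (2 * INR (g v) + 1) / (2 * INR N)))
  / (INR N ^ n).

(* sigma(seed) = s : the expected spread, i.e. the integral over the
   thresholds theta uniform on [0,1]^V, is s.  The integrand is a bounded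
   step function with finitely many hyperplane discontinuities, so it is
   Riemann integrable and its integral is the limit of the midpoint sums. *)
Definition sigma_is (n : nat) (E : nat -> nat -> bool) (w : nat -> nat -> R)
  (seed : nat -> bool) (s : R) : Prop :=
  Un_cv (fun N => cube_riemann n (S N) (lt_spread n E w seed)) s.

(* Both quantities are total weights of directed paths out of [u].  Unfolding the
   EaSyIM recursion [l] times sums the weights of the paths of length [1..l], and no
   path is longer than [L].  For the spread, acyclicity makes the activity of a node
   depend only on the thresholds of its ancestors, so the threshold of [v] is
   independent of its active in-weight.  Averaging over that one threshold, [v <> u]
   becomes active with probability equal to its expected active in-weight
   [sum_x w(x,v) P(x active)], up to the grid error [1/N].  Unrolling this linear
   recursion from [P(u active) = 1] yields the total weight of the paths from [u] to
   [v], and the midpoint Riemann sums are within [n^2/N] of it. *)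

From Stdlib Require Import Reals List Arith Lia Lra FunctionalExtensionality Bool.
Import ListNotations.
Open Scope R_scope.

Lemma lsum_cons f x l : lsum f (x :: l) = f x + lsum f l.
Proof. reflexivity. Qed.

Lemma lsum_app f l1 l2 : lsum f (l1 ++ l2) = lsum f l1 + lsum f l2.
Proof. induction l1 as [|x l1 IH]; simpl; [ring|]. rewrite IH; ring. Qed.

Lemma lsum_ext f g l : (forall x, In x l -> f x = g x) -> lsum f l = lsum g l.
Proof.
  induction l as [|x l IH]; intros Hfg; simpl; [reflexivity|].
  rewrite Hfg by (left; reflexivity). rewrite IH; [reflexivity|].
  intros y Hy. apply Hfg. now right.
Qed.

Lemma lsum_zero f l : (forall x, In x l -> f x = 0) -> lsum f l = 0.
Proof.
  induction l as [|x l IH]; intros Hf; simpl; [reflexivity|].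
  rewrite Hf by (left; reflexivity). rewrite IH; [ring|].
  intros y Hy. apply Hf. now right.
Qed.

Lemma lsum_plus f g l : lsum (fun x => f x + g x) l = lsum f l + lsum g l.
Proof. induction l as [|x l IH]; simpl; [ring|]. rewrite IH; ring. Qed.

Lemma lsum_mult_l c f l : lsum (fun x => c * f x) l = c * lsum f l.
Proof. induction l as [|x l IH]; simpl; [ring|]. rewrite IH; ring. Qed.

Lemma lsum_const c l : lsum (fun _ => c) l = c * INR (length l).
Proof.
  induction l as [|x l IH]; [simpl; ring|].
  change (length (x :: l)) with (S (length l)). rewrite S_INR. simpl. rewrite IH; ring.
Qed.

Lemma lsum_le f g l : (forall x, In x l -> f x <= g x) -> lsum f l <= lsum g l.
Proof.
  induction l as [|x l IH]; intros Hfg; simpl; [lra|].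
  apply Rplus_le_compat; [apply Hfg; now left | apply IH; intros y Hy; apply Hfg; now right].
Qed.

Lemma lsum_nonneg f l : (forall x, In x l -> 0 <= f x) -> 0 <= lsum f l.
Proof. intros Hf. rewrite <- (lsum_zero (fun _ => 0) l) by auto. now apply lsum_le. Qed.

Lemma lsum_comm (f : nat -> nat -> R) l1 l2 :
  lsum (fun x => lsum (fun y => f x y) l2) l1 = lsum (fun y => lsum (fun x => f x y) l1) l2.
Proof.
  induction l1 as [|x l1 IH]; simpl.
  - symmetry. now apply lsum_zero.
  - rewrite IH, <- lsum_plus. reflexivity.
Qed.

Lemma lsum_map f h l : lsum f (map h l) = lsum (fun x => f (h x)) l.
Proof. induction l as [|x l IH]; simpl; [reflexivity|]. now rewrite IH. Qed.

Lemma lsum_neq0 f l : lsum f l <> 0 -> exists x, In x l /\ f x <> 0.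
Proof.
  induction l as [|x l IH]; simpl; intros Hsum; [lra|].
  destruct (Req_dec (f x) 0) as [Hx|Hx].
  - destruct IH as [y [Hy Hfy]]; [lra|]. eauto.
  - eauto.
Qed.

Lemma lsum_delta f s l : NoDup l -> (~ In s l -> f s = 0) ->
  lsum (fun x => if Nat.eqb s x then f x else 0) l = f s.
Proof.
  induction l as [|x l IH]; intros Hnd Hout; simpl; [symmetry; auto|].
  inversion Hnd as [|? ? Hx Hnd']; subst.
  destruct (Nat.eqb_spec s x) as [<-|Hsx].
  - rewrite lsum_zero; [ring|]. intros y Hy.
    destruct (Nat.eqb_spec s y); [subst; contradiction | reflexivity].
  - rewrite IH; [ring | exact Hnd' |]. intros Hs. apply Hout.
    intros [Hxs|Hin]; [now apply Hsx | contradiction].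
Qed.

Lemma lsum_abs_diff f g l : Rabs (lsum f l - lsum g l) <= lsum (fun x => Rabs (f x - g x)) l.
Proof.
  induction l as [|x l IH]; simpl.
  - rewrite Rminus_0_r, Rabs_R0. lra.
  - replace (f x + lsum f l - (g x + lsum g l)) with ((f x - g x) + (lsum f l - lsum g l)) by ring.
    eapply Rle_trans; [apply Rabs_triang | lra].
Qed.

Lemma lsum_weighted_abs_diff_le c f g l e :
  (forall x, In x l -> 0 <= c x) -> lsum c l <= 1 -> 0 <= e ->
  (forall x, In x l -> Rabs (f x - g x) <= e) ->
  Rabs (lsum (fun x => c x * f x) l - lsum (fun x => c x * g x) l) <= e.
Proof.
  intros Hc Hsum He Hfg. eapply Rle_trans; [apply lsum_abs_diff|].
  apply Rle_trans with (lsum (fun x => e * c x) l).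
  - apply lsum_le. intros x Hx.
    rewrite <- Rmult_minus_distr_l, Rabs_mult, (Rabs_pos_eq (c x)) by auto.
    rewrite Rmult_comm. apply Rmult_le_compat_r; auto.
  - rewrite lsum_mult_l. rewrite <- (Rmult_1_r e) at 2. now apply Rmult_le_compat_l.
Qed.

Lemma lsum_seq_trunc f K k : (K <= k)%nat -> (forall j, (K < j)%nat -> f j = 0) ->
  lsum f (seq 1 k) = lsum f (seq 1 K).
Proof.
  intros HKk Hf. replace k with (K + (k - K))%nat by lia.
  rewrite seq_app, lsum_app, (lsum_zero f (seq (1 + K) _)); [ring|].
  intros j Hj. apply in_seq in Hj. apply Hf. lia.
Qed.

Lemma lsumL_flat_map f (h : nat -> list (list nat)) l :
  lsumL f (flat_map h l) = lsum (fun x => lsumL f (h x)) l.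
Proof.
  induction l as [|x l IH]; simpl; [reflexivity|]. rewrite <- IH.
  induction (h x) as [|p m IHm]; simpl; [ring|]. rewrite IHm; ring.
Qed.

Lemma lsumL_map f h l : lsumL f (map h l) = lsumL (fun x => f (h x)) l.
Proof. induction l as [|x l IH]; simpl; [reflexivity|]. now rewrite IH. Qed.

Lemma lsumL_ext f g l : (forall x, In x l -> f x = g x) -> lsumL f l = lsumL g l.
Proof.
  induction l as [|x l IH]; intros Hfg; simpl; [reflexivity|].
  rewrite Hfg by (left; reflexivity). rewrite IH; [reflexivity|].
  intros y Hy. apply Hfg. now right.
Qed.

Lemma lsumL_mult_l c f l : lsumL (fun x => c * f x) l = c * lsumL f l.
Proof. induction l as [|x l IH]; simpl; [ring|]. rewrite IH; ring. Qed.

Lemma lsumL_zero f l : (forall x, In x l -> f x = 0) -> lsumL f l = 0.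
Proof.
  induction l as [|x l IH]; intros Hf; simpl; [reflexivity|].
  rewrite Hf by (left; reflexivity). rewrite IH; [ring|].
  intros y Hy. apply Hf. now right.
Qed.

Lemma last_cons (x y : nat) p : last (x :: p) y = last p x.
Proof.
  revert x y; induction p as [|z p IH]; intros x y; [reflexivity|].
  change (last (z :: p) y = last (z :: p) x). now rewrite !IH.
Qed.

Lemma is_pathb_app E x p q :
  is_pathb E x (p ++ q) = is_pathb E x p && is_pathb E (last p x) q.
Proof.
  revert x; induction p as [|y p IH]; intros x; [reflexivity|].
  cbn [is_pathb app]. rewrite IH, last_cons, andb_assoc. reflexivity.
Qed.

Lemma is_pathb_snoc E x p y : is_pathb E x p = true -> E (last p x) y = true ->
  is_pathb E x (p ++ [y]) = true.
Proof. intros Hp Hy. rewrite is_pathb_app, Hp. simpl. now rewrite Hy. Qed.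

Lemma is_pathb_in_bound n E x p y : (forall x y, E x y = true -> (x < n)%nat /\ (y < n)%nat) ->
  is_pathb E x p = true -> In y p -> (y < n)%nat.
Proof.
  intros HE; revert x; induction p as [|z p IH]; intros x Hp Hy; simpl in *; [tauto|].
  apply andb_prop in Hp as [Hxz Hp]. destruct Hy as [<-|Hy]; [apply (HE x) | apply (IH z)]; auto.
Qed.

Lemma acyclic_path_NoDup E x p : acyclic E -> is_pathb E x p = true -> NoDup p.
Proof.
  intros Hac; revert x; induction p as [|y p IH]; intros x Hp; simpl in Hp; [constructor|].
  apply andb_prop in Hp as [_ Hp]. constructor; [|eauto].
  intros Hy. apply in_split in Hy as [p1 [p2 ->]].
  replace (p1 ++ y :: p2) with ((p1 ++ [y]) ++ p2) in Hp by now rewrite <- app_assoc.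
  rewrite is_pathb_app in Hp. apply andb_prop in Hp as [Hp _].
  apply (Hac y (p1 ++ [y])); [now destruct p1 | exact Hp | apply last_last].
Qed.

Definition reaches (E : nat -> nat -> bool) (x v : nat) : Prop :=
  exists p, is_pathb E x p = true /\ last p x = v.

Lemma reaches_refl E v : reaches E v v.
Proof. now exists []. Qed.

Lemma reaches_snoc E x y v : reaches E x y -> E y v = true -> reaches E x v.
Proof.
  intros [p [Hp <-]] Hv. exists (p ++ [v]).
  split; [now apply is_pathb_snoc | apply last_last].
Qed.

Lemma acyclic_edge_not_reaches E x v : acyclic E -> E x v = true -> ~ reaches E v x.
Proof.
  intros Hac Hxv [p [Hp Hlast]].
  apply (Hac v (p ++ [v])); [now destruct p | | apply last_last].
  apply is_pathb_snoc; [exact Hp | now rewrite Hlast].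
Qed.

Lemma longest_path_length_le n E L :
  (forall x y, E x y = true -> (x < n)%nat /\ (y < n)%nat) ->
  acyclic E -> longest_path_length E L -> (L <= n)%nat.
Proof.
  intros HE Hac [[x [p [Hp <-]]] _].
  rewrite <- (length_seq n 0). apply NoDup_incl_length; [eapply acyclic_path_NoDup; eauto|].
  intros y Hy. apply in_seq. split; [lia|]. eapply is_pathb_in_bound; eauto.
Qed.

Definition upd (g : nat -> nat) (v j : nat) : nat -> nat :=
  fun y => if Nat.eqb y v then j else g y.

Lemma upd_upd_same g v j k : upd (upd g v j) v k = upd g v k.
Proof. extensionality y. unfold upd. now destruct (Nat.eqb y v). Qed.

Lemma upd_upd_comm g v j m k : v <> m -> upd (upd g v j) m k = upd (upd g m k) v j.
Proof.
  intros Hvm. extensionality y. unfold upd.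
  destruct (Nat.eqb_spec y m), (Nat.eqb_spec y v); congruence.
Qed.

Lemma grid_sum_succ N m F :
  grid_sum N (S m) F = grid_sum N m (fun g => lsum (fun k => F (upd g m k)) (seq 0 N)).
Proof. reflexivity. Qed.

Lemma grid_sum_ext N m F G : (forall g, F g = G g) -> grid_sum N m F = grid_sum N m G.
Proof.
  revert F G; induction m as [|m IH]; intros F G HFG; [apply HFG|].
  rewrite !grid_sum_succ. apply IH. intros g. apply lsum_ext. auto.
Qed.

Lemma grid_sum_le N m F G : (forall g, F g <= G g) -> grid_sum N m F <= grid_sum N m G.
Proof.
  revert F G; induction m as [|m IH]; intros F G HFG; [apply HFG|].
  rewrite !grid_sum_succ. apply IH. intros g. apply lsum_le. auto.
Qed.

Lemma grid_sum_plus N m F G :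
  grid_sum N m (fun g => F g + G g) = grid_sum N m F + grid_sum N m G.
Proof.
  revert F G; induction m as [|m IH]; intros F G; [reflexivity|].
  rewrite !grid_sum_succ, <- IH. apply grid_sum_ext. intros g. apply lsum_plus.
Qed.

Lemma grid_sum_mult_l N m c F : grid_sum N m (fun g => c * F g) = c * grid_sum N m F.
Proof.
  revert F; induction m as [|m IH]; intros F; [reflexivity|].
  rewrite !grid_sum_succ, <- IH. apply grid_sum_ext. intros g. apply lsum_mult_l.
Qed.

Lemma grid_sum_const N m c : grid_sum N m (fun _ => c) = c * INR N ^ m.
Proof.
  revert c; induction m as [|m IH]; intros c; [simpl; ring|].
  rewrite grid_sum_succ, (grid_sum_ext _ _ _ (fun _ => c * INR N)), IH; [simpl; ring|].
  intros g. now rewrite lsum_const, length_seq.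
Qed.

Lemma grid_sum_lsum N m (F : nat -> (nat -> nat) -> R) l :
  grid_sum N m (fun g => lsum (fun x => F x g) l) = lsum (fun x => grid_sum N m (F x)) l.
Proof.
  induction l as [|x l IH]; simpl.
  - now rewrite grid_sum_const, Rmult_0_l.
  - now rewrite grid_sum_plus, IH.
Qed.

Lemma grid_sum_avg_coord N m F v : (0 < N)%nat -> (v < m)%nat ->
  grid_sum N m F = grid_sum N m (fun g => lsum (fun j => F (upd g v j)) (seq 0 N) / INR N).
Proof.
  intros HN. assert (HNpos : 0 < INR N) by (apply lt_0_INR; lia).
  revert F; induction m as [|m IH]; intros F Hv; [lia|]. rewrite !grid_sum_succ.
  destruct (Nat.eq_dec v m) as [->|Hvm].
  - apply grid_sum_ext. intros g.
    rewrite (lsum_ext (fun k => _ / INR N)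
               (fun _ => lsum (fun j => F (upd g m j)) (seq 0 N) / INR N)).
    + rewrite lsum_const, length_seq. field. lra.
    + intros k _. f_equal. apply lsum_ext. intros j _. now rewrite upd_upd_same.
  - rewrite (IH (fun g => lsum (fun k => F (upd g m k)) (seq 0 N))) by lia.
    apply grid_sum_ext. intros g. unfold Rdiv.
    rewrite Rmult_comm, <- lsum_mult_l.
    transitivity
      (lsum (fun j => lsum (fun k => / INR N * F (upd (upd g v j) m k)) (seq 0 N)) (seq 0 N)).
    { apply lsum_ext. intros j _. now rewrite lsum_mult_l. }
    rewrite lsum_comm. apply lsum_ext. intros k _. rewrite Rmult_comm, <- lsum_mult_l.
    apply lsum_ext. intros j _. now rewrite upd_upd_comm.
Qed.

Definition grid_avg (N m : nat) (F : (nat -> nat) -> R) : R := grid_sum N m F / INR N ^ m.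

Lemma grid_avg_ext N m F G : (forall g, F g = G g) -> grid_avg N m F = grid_avg N m G.
Proof. intros HFG. unfold grid_avg. now rewrite (grid_sum_ext _ _ F G). Qed.

Lemma grid_avg_const N m c : (0 < N)%nat -> grid_avg N m (fun _ => c) = c.
Proof.
  intros HN. unfold grid_avg. rewrite grid_sum_const. field.
  apply pow_nonzero, not_0_INR. lia.
Qed.

Lemma grid_avg_plus N m F G :
  grid_avg N m (fun g => F g + G g) = grid_avg N m F + grid_avg N m G.
Proof. unfold grid_avg. rewrite grid_sum_plus. unfold Rdiv. ring. Qed.

Lemma grid_avg_mult_l N m c F : grid_avg N m (fun g => c * F g) = c * grid_avg N m F.
Proof. unfold grid_avg. rewrite grid_sum_mult_l. unfold Rdiv. ring. Qed.

Lemma grid_avg_lsum N m (F : nat -> (nat -> nat) -> R) l :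
  grid_avg N m (fun g => lsum (fun x => F x g) l) = lsum (fun x => grid_avg N m (F x)) l.
Proof.
  unfold grid_avg, Rdiv. rewrite grid_sum_lsum, Rmult_comm, <- lsum_mult_l.
  apply lsum_ext. intros x _. ring.
Qed.

Lemma grid_avg_le N m F G : (0 < N)%nat -> (forall g, F g <= G g) ->
  grid_avg N m F <= grid_avg N m G.
Proof.
  intros HN HFG. unfold grid_avg, Rdiv. apply Rmult_le_compat_r.
  - left. apply Rinv_0_lt_compat, pow_lt, lt_0_INR. lia.
  - now apply grid_sum_le.
Qed.

Lemma grid_avg_abs_diff_le N m F G e : (0 < N)%nat -> (forall g, Rabs (F g - G g) <= e) ->
  Rabs (grid_avg N m F - grid_avg N m G) <= e.
Proof.
  intros HN HFG.
  assert (Hup : grid_avg N m F <= grid_avg N m (fun g => G g + e)).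
  { apply grid_avg_le; [exact HN|]. intros g.
    pose proof (Rle_abs (F g - G g)). specialize (HFG g). lra. }
  assert (Hlo : grid_avg N m G <= grid_avg N m (fun g => F g + e)).
  { apply grid_avg_le; [exact HN|]. intros g.
    pose proof (Rle_abs (G g - F g)) as HGF. rewrite Rabs_minus_sym in HGF.
    specialize (HFG g). lra. }
  rewrite grid_avg_plus, grid_avg_const in Hup, Hlo by exact HN.
  apply Rabs_le. lra.
Qed.

Definition odd_count (M : nat) (x : R) : R :=
  lsum (fun j => if Rle_dec (2 * INR j + 1) x then 1 else 0) (seq 0 M).

Lemma odd_count_succ M x :
  odd_count (S M) x = odd_count M x + (if Rle_dec (2 * INR M + 1) x then 1 else 0).
Proof. unfold odd_count. rewrite seq_S, lsum_app. simpl. ring. Qed.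

Lemma odd_count_le M x : odd_count M x <= INR M.
Proof.
  induction M as [|M IH]; [unfold odd_count; simpl; lra|].
  rewrite odd_count_succ, S_INR. destruct Rle_dec; lra.
Qed.

Lemma odd_count_upper M x : -1 <= x -> odd_count M x <= (x + 1) / 2.
Proof.
  intros Hx. induction M as [|M IH]; [unfold odd_count; simpl; lra|].
  rewrite odd_count_succ. pose proof (odd_count_le M x). destruct Rle_dec; lra.
Qed.

Lemma odd_count_lower M x : INR M <= odd_count M x \/ (x - 1) / 2 <= odd_count M x.
Proof.
  induction M as [|M IH]; [left; unfold odd_count; simpl; lra|].
  rewrite odd_count_succ, S_INR. destruct Rle_dec, IH; [left | right | right | right]; lra.
Qed.

Definition midpoint_count (N : nat) (a : R) : R :=
  lsum (fun j => if Rle_dec ((2 * INR j + 1) / (2 * INR N)) a then 1 else 0) (seq 0 N).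

Lemma midpoint_count_odd_count N a : (0 < N)%nat ->
  midpoint_count N a = odd_count N (2 * INR N * a).
Proof.
  intros HN. assert (HNpos : 0 < INR N) by (apply lt_0_INR; lia).
  apply lsum_ext. intros j _.
  assert (Hmid : (2 * INR j + 1) / (2 * INR N) * (2 * INR N) = 2 * INR j + 1) by (field; lra).
  destruct Rle_dec, Rle_dec; [reflexivity | nra | nra | reflexivity].
Qed.

Lemma midpoint_count_approx N a : (0 < N)%nat -> 0 <= a <= 1 ->
  Rabs (midpoint_count N a / INR N - a) <= 1 / INR N.
Proof.
  intros HN Ha. assert (HNpos : 0 < INR N) by (apply lt_0_INR; lia).
  rewrite midpoint_count_odd_count by exact HN.
  set (c := odd_count N (2 * INR N * a)).
  assert (Hup : c <= INR N * a + 1 / 2).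
  { pose proof (odd_count_upper N (2 * INR N * a)). unfold c. nra. }
  assert (Hlo : INR N * a - 1 / 2 <= c).
  { destruct (odd_count_lower N (2 * INR N * a)); unfold c; nra. }
  replace (c / INR N - a) with ((c - INR N * a) * / INR N) by (field; lra).
  assert (Hinv : 0 < / INR N) by (apply Rinv_0_lt_compat; exact HNpos).
  unfold Rdiv. rewrite Rmult_1_l. apply Rabs_le. split; nra.
Qed.

Section WeightedDag.

Variable n : nat.
Variable E : nat -> nat -> bool.
Variable w : nat -> nat -> R.

Hypothesis E_bound : forall x y, E x y = true -> (x < n)%nat /\ (y < n)%nat.
Hypothesis E_acyclic : acyclic E.

Lemma in_verts v : In v (verts n) <-> (v < n)%nat.
Proof. unfold verts. rewrite in_seq. lia. Qed.

Definition edge_weight (x y : nat) : R := if E x y then w x y else 0.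

Lemma edge_weight_out_of_bound x y : ~ ((x < n)%nat /\ (y < n)%nat) -> edge_weight x y = 0.
Proof.
  intros Hxy. unfold edge_weight. destruct (E x y) eqn:Exy; [|reflexivity].
  exfalso. exact (Hxy (E_bound x y Exy)).
Qed.

Lemma lsum_verts_delta f s : (~ (s < n)%nat -> f s = 0) ->
  lsum (fun x => if Nat.eqb s x then f x else 0) (verts n) = f s.
Proof.
  intros Hout. apply lsum_delta; [apply seq_NoDup|].
  intros Hs. apply Hout. now rewrite <- in_verts.
Qed.

Fixpoint walk_weight (k s v : nat) : R :=
  match k with
  | O => if Nat.eqb s v then 1 else 0
  | S k' => lsum (fun x => walk_weight k' s x * edge_weight x v) (verts n)
  end.

Lemma walk_weight_succ k s v :
  walk_weight (S k) s v = lsum (fun x => walk_weight k s x * edge_weight x v) (verts n).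
Proof. reflexivity. Qed.

Lemma walk_weight_succ_l k s v :
  walk_weight (S k) s v = lsum (fun y => edge_weight s y * walk_weight k y v) (verts n).
Proof.
  revert s v; induction k as [|k IH]; intros s v.
  - transitivity (edge_weight s v).
    + simpl. rewrite <- (lsum_verts_delta (fun x => edge_weight x v));
        [| intros Hs; apply edge_weight_out_of_bound; tauto].
      apply lsum_ext. intros x _. destruct (Nat.eqb s x); ring.
    + rewrite <- (lsum_verts_delta (fun y => edge_weight s y));
        [| intros Hv; apply edge_weight_out_of_bound; tauto].
      apply lsum_ext. intros y _. simpl.
      destruct (Nat.eqb_spec v y), (Nat.eqb_spec y v); subst; try congruence; ring.
  - rewrite (walk_weight_succ (S k)).
    transitivity (lsum (fun x => lsum (fun y =>
      edge_weight s y * walk_weight k y x * edge_weight x v) (verts n)) (verts n)).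
    + apply lsum_ext. intros x _. rewrite IH, Rmult_comm, <- lsum_mult_l.
      apply lsum_ext. intros y _. ring.
    + rewrite lsum_comm. apply lsum_ext. intros y _. rewrite walk_weight_succ, <- lsum_mult_l.
      apply lsum_ext. intros x _. ring.
Qed.

Lemma walk_weight_neq0_path k s v : walk_weight k s v <> 0 ->
  exists p, is_pathb E s p = true /\ length p = k /\ last p s = v.
Proof.
  revert v; induction k as [|k IH]; intros v Hk.
  - exists []. simpl in Hk. destruct (Nat.eqb_spec s v); [now subst | lra].
  - rewrite walk_weight_succ in Hk. apply lsum_neq0 in Hk as [x [_ Hx]].
    assert (Hkx : walk_weight k s x <> 0) by (intros H0; apply Hx; rewrite H0; ring).
    assert (Exv : E x v = true).
    { unfold edge_weight in Hx. destruct (E x v); [reflexivity|]. exfalso. apply Hx. ring. }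
    destruct (IH x Hkx) as [p [Hp [Hlen Hlast]]].
    exists (p ++ [v]). split; [|split].
    + apply is_pathb_snoc; [exact Hp | now rewrite Hlast].
    + rewrite length_app, Hlen. simpl. lia.
    + apply last_last.
Qed.

Lemma walk_weight_cycle k u : (0 < k)%nat -> walk_weight k u u = 0.
Proof.
  intros Hk. destruct (Req_dec (walk_weight k u u) 0) as [H0|H0]; [exact H0|].
  destruct (walk_weight_neq0_path _ _ _ H0) as [p [Hp [Hlen Hlast]]].
  exfalso. apply (E_acyclic u p); [intros ->; simpl in Hlen; lia | exact Hp | exact Hlast].
Qed.

Lemma all_lists_length k p : In p (all_lists n k) -> length p = k.
Proof.
  revert p; induction k as [|k IH]; intros p Hp; simpl in Hp.
  - destruct Hp as [<-|[]]. reflexivity.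
  - apply in_flat_map in Hp as [v [_ Hp]]. apply in_map_iff in Hp as [q [<- Hq]].
    simpl. now rewrite IH.
Qed.

Definition paths_weight (k s : nat) : R :=
  lsumL (fun p => if is_pathb E s p then path_weight w s p else 0) (all_lists n k).

Lemma paths_weight_0 s : paths_weight 0 s = 1.
Proof. unfold paths_weight. simpl. ring. Qed.

Lemma paths_weight_succ k s :
  paths_weight (S k) s = lsum (fun v => edge_weight s v * paths_weight k v) (verts n).
Proof.
  unfold paths_weight. cbn [all_lists]. rewrite lsumL_flat_map. apply lsum_ext. intros v _.
  rewrite lsumL_map. cbn [is_pathb path_weight]. unfold edge_weight. destruct (E s v); simpl.
  - rewrite <- lsumL_mult_l. apply lsumL_ext. intros p _. destruct (is_pathb E v p); ring.
  - rewrite lsumL_zero; [ring | reflexivity].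
Qed.

Lemma paths_weight_beyond L k s : longest_path_length E L -> (L < k)%nat -> paths_weight k s = 0.
Proof.
  intros [_ HL] HLk. apply lsumL_zero. intros p Hp.
  destruct (is_pathb E s p) eqn:Hsp; [|reflexivity].
  apply HL in Hsp. apply all_lists_length in Hp. lia.
Qed.

Lemma paths_weight_walks k s : (s < n)%nat ->
  paths_weight k s = lsum (fun v => walk_weight k s v) (verts n).
Proof.
  revert s; induction k as [|k IH]; intros s Hs.
  - rewrite paths_weight_0. symmetry. apply (lsum_verts_delta (fun _ => 1)). contradiction.
  - rewrite paths_weight_succ.
    transitivity
      (lsum (fun y => lsum (fun v => edge_weight s y * walk_weight k y v) (verts n)) (verts n)).
    + apply lsum_ext. intros y Hy. rewrite IH, lsum_mult_l; [reflexivity|]. now apply in_verts.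
    + rewrite lsum_comm. apply lsum_ext. intros v _. now rewrite walk_weight_succ_l.
Qed.

Lemma easyim_paths_weight k s : easyim n E w k s = lsum (fun j => paths_weight j s) (seq 1 k).
Proof.
  revert s; induction k as [|k IH]; intros s; [reflexivity|].
  cbn [easyim]. change (seq 1 (S k)) with (1%nat :: seq 2 k).
  rewrite lsum_cons, <- seq_shift, lsum_map.
  transitivity (lsum (fun v => edge_weight s v * paths_weight 0 v
    + lsum (fun j => edge_weight s v * paths_weight j v) (seq 1 k)) (verts n)).
  { apply lsum_ext. intros v _. rewrite paths_weight_0, lsum_mult_l, <- IH.
    unfold edge_weight. destruct (E s v); ring. }
  rewrite lsum_plus, paths_weight_succ, lsum_comm. f_equal.
  apply lsum_ext. intros j _. now rewrite paths_weight_succ.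
Qed.

Lemma easyim_eq_path_sum L l u : longest_path_length E L -> (L <= l)%nat ->
  easyim n E w l u = path_sum n E w L u.
Proof.
  intros HL Hl. rewrite easyim_paths_weight.
  change (path_sum n E w L u) with (lsum (fun k => paths_weight k u) (seq 1 L)).
  apply lsum_seq_trunc; [exact Hl|]. intros j Hj. eapply paths_weight_beyond; eauto.
Qed.

(* Limit, as the threshold grid is refined, of the probability that [v] is active
   after [k] rounds when [u] is the only seed. *)
Fixpoint activation_prob (u k v : nat) : R :=
  match k with
  | O => if Nat.eqb v u then 1 else 0
  | S k' => if Nat.eqb v u then 1
            else lsum (fun x => edge_weight x v * activation_prob u k' x) (verts n)
  end.

Lemma activation_prob_walks u k v :
  activation_prob u k v = lsum (fun j => walk_weight j u v) (seq 0 (S k)).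
Proof.
  revert v; induction k as [|k IH]; intros v.
  - simpl. rewrite Nat.eqb_sym. ring.
  - change (seq 0 (S (S k))) with (0%nat :: seq 1 (S k)).
    rewrite lsum_cons, <- seq_shift, lsum_map.
    change (walk_weight 0 u v) with (if Nat.eqb u v then 1 else 0). cbn [activation_prob].
    destruct (Nat.eqb_spec v u) as [->|Hvu].
    + rewrite Nat.eqb_refl, lsum_zero; [ring|]. intros j _. apply walk_weight_cycle. lia.
    + destruct (Nat.eqb_spec u v); [congruence|]. rewrite Rplus_0_l.
      transitivity (lsum (fun x =>
        lsum (fun j => walk_weight j u x * edge_weight x v) (seq 0 (S k))) (verts n)).
      { apply lsum_ext. intros x _. rewrite IH, <- lsum_mult_l.
        apply lsum_ext. intros j _. ring. }
      rewrite lsum_comm. apply lsum_ext. intros j _. now rewrite walk_weight_succ.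
Qed.

Lemma nonseed_activation_prob_sum L u : longest_path_length E L -> (u < n)%nat ->
  lsum (fun v => if Nat.eqb v u then 0 else activation_prob u n v) (verts n) = path_sum n E w L u.
Proof.
  intros HL Hu.
  change (path_sum n E w L u) with (lsum (fun k => paths_weight k u) (seq 1 L)).
  rewrite <- (lsum_seq_trunc _ L n);
    [| eapply longest_path_length_le; eauto | intros; eapply paths_weight_beyond; eauto].
  transitivity (lsum (fun v => lsum (fun j => walk_weight j u v) (seq 1 n)) (verts n)).
  - apply lsum_ext. intros v _. rewrite activation_prob_walks.
    change (seq 0 (S n)) with (0%nat :: seq 1 n). rewrite lsum_cons.
    change (walk_weight 0 u v) with (if Nat.eqb u v then 1 else 0).
    destruct (Nat.eqb_spec v u) as [->|Hvu].
    + symmetry. apply lsum_zero. intros j Hj. apply in_seq in Hj. apply walk_weight_cycle. lia.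
    + destruct (Nat.eqb_spec u v); [congruence|]. ring.
  - rewrite lsum_comm. apply lsum_ext. intros k _. symmetry. now apply paths_weight_walks.
Qed.

Hypothesis w_nonneg : forall x y, E x y = true -> 0 <= w x y.
Hypothesis in_weight_le_1 :
  forall v, (v < n)%nat -> lsum (fun x => if E x v then w x v else 0) (verts n) <= 1.

Lemma edge_weight_nonneg x y : 0 <= edge_weight x y.
Proof. unfold edge_weight. destruct (E x y) eqn:Exy; [now apply w_nonneg | lra]. Qed.

Variables N u : nat.
Hypothesis N_pos : (0 < N)%nat.

Definition ind (b : bool) : R := if b then 1 else 0.

Definition theta (g : nat -> nat) (v : nat) : R := (2 * INR (g v) + 1) / (2 * INR N).

Definition active (k : nat) (g : nat -> nat) : nat -> bool :=
  lt_active n E w (theta g) (fun x => Nat.eqb x u) k.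

Definition in_weight (k : nat) (g : nat -> nat) (v : nat) : R :=
  in_active_weight n E w (active k g) v.

Lemma active_succ k g v : active (S k) g v =
  active k g v || (if Rle_dec (theta g v) (in_weight k g v) then true else false).
Proof. reflexivity. Qed.

Lemma in_weight_eq k g v :
  in_weight k g v = lsum (fun x => edge_weight x v * ind (active k g x)) (verts n).
Proof.
  apply lsum_ext. intros x _. unfold edge_weight, ind.
  destruct (E x v), (active k g x); simpl; ring.
Qed.

Lemma active_seed k g : active k g u = true.
Proof. induction k as [|k IH]; [apply Nat.eqb_refl|]. now rewrite active_succ, IH. Qed.

Lemma in_weight_mono k g v : in_weight k g v <= in_weight (S k) g v.
Proof.
  rewrite !in_weight_eq. apply lsum_le. intros x _.
  pose proof (edge_weight_nonneg x v). unfold ind. rewrite active_succ.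
  destruct (active k g x), Rle_dec; simpl; lra.
Qed.

Lemma active_nonseed k g v : v <> u ->
  active (S k) g v = if Rle_dec (theta g v) (in_weight k g v) then true else false.
Proof.
  intros Hvu. induction k as [|k IH].
  - rewrite active_succ. change (active 0 g v) with (Nat.eqb v u).
    destruct (Nat.eqb_spec v u); [congruence | reflexivity].
  - rewrite active_succ, IH. pose proof (in_weight_mono k g v).
    destruct (Rle_dec (theta g v) (in_weight k g v)),
      (Rle_dec (theta g v) (in_weight (S k) g v)); simpl; auto; lra.
Qed.

Lemma active_local k v g g' : (forall y, reaches E y v -> g y = g' y) ->
  active k g v = active k g' v.
Proof.
  revert v; induction k as [|k IH]; intros v Hgg'; [reflexivity|].
  rewrite !active_succ, (IH v Hgg').
  assert (Htheta : theta g v = theta g' v).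
  { unfold theta. now rewrite (Hgg' v (reaches_refl E v)). }
  assert (Hin : in_weight k g v = in_weight k g' v).
  { apply lsum_ext. intros x _. destruct (E x v) eqn:Exv; [|reflexivity]. simpl.
    rewrite (IH x); [reflexivity|]. intros y Hy. apply Hgg'. eapply reaches_snoc; eauto. }
  now rewrite Htheta, Hin.
Qed.

(* No in-neighbour of [v] is reachable from [v], so none of them sees the threshold of [v]. *)
Lemma in_weight_upd k g v j : in_weight k (upd g v j) v = in_weight k g v.
Proof.
  apply lsum_ext. intros x _. destruct (E x v) eqn:Exv; [|reflexivity]. simpl.
  rewrite (active_local k x (upd g v j) g); [reflexivity|].
  intros y Hy. unfold upd. destruct (Nat.eqb_spec y v) as [->|]; [|reflexivity].
  exfalso. exact (acyclic_edge_not_reaches E x v E_acyclic Exv Hy).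
Qed.

Lemma in_weight_bounds k g v : (v < n)%nat -> 0 <= in_weight k g v <= 1.
Proof.
  intros Hv. rewrite in_weight_eq. split.
  - apply lsum_nonneg. intros x _. pose proof (edge_weight_nonneg x v). unfold ind.
    destruct (active k g x); lra.
  - eapply Rle_trans; [| exact (in_weight_le_1 v Hv)]. apply lsum_le. intros x _.
    change (edge_weight x v * ind (active k g x) <= edge_weight x v).
    pose proof (edge_weight_nonneg x v). unfold ind. destruct (active k g x); lra.
Qed.

Lemma avg_active_succ k v : (v < n)%nat -> v <> u ->
  grid_avg N n (fun g => ind (active (S k) g v))
  = grid_avg N n (fun g => midpoint_count N (in_weight k g v) / INR N).
Proof.
  intros Hv Hvu. unfold grid_avg. f_equal.
  rewrite (grid_sum_avg_coord N n _ v N_pos Hv). apply grid_sum_ext. intros g. f_equal.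
  apply lsum_ext. intros j _.
  rewrite active_nonseed, in_weight_upd by exact Hvu.
  unfold ind, theta, upd. rewrite Nat.eqb_refl. now destruct Rle_dec.
Qed.

Lemma avg_in_weight k v : grid_avg N n (fun g => in_weight k g v)
  = lsum (fun x => edge_weight x v * grid_avg N n (fun g => ind (active k g x))) (verts n).
Proof.
  transitivity
    (grid_avg N n (fun g => lsum (fun x => edge_weight x v * ind (active k g x)) (verts n))).
  - apply grid_avg_ext. intros g. apply in_weight_eq.
  - rewrite grid_avg_lsum. apply lsum_ext. intros x _. apply grid_avg_mult_l.
Qed.

Lemma avg_active_approx k v : (v < n)%nat ->
  Rabs (grid_avg N n (fun g => ind (active k g v)) - activation_prob u k v) <= INR k / INR N.
Proof.
  assert (HNpos : 0 < INR N) by (apply lt_0_INR; exact N_pos).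
  revert v; induction k as [|k IH]; intros v Hv.
  - rewrite (grid_avg_ext _ _ _ (fun _ => ind (Nat.eqb v u))), grid_avg_const by easy.
    replace (INR 0 / INR N) with 0 by (simpl; field; lra).
    unfold ind. simpl. destruct (Nat.eqb v u); rewrite Rminus_diag, Rabs_R0; lra.
  - destruct (Nat.eqb_spec v u) as [->|Hvu].
    + rewrite (grid_avg_ext _ _ _ (fun _ => 1)) by (intros g; now rewrite active_seed).
      rewrite grid_avg_const by exact N_pos. simpl activation_prob. rewrite Nat.eqb_refl.
      rewrite Rminus_diag, Rabs_R0.
      apply Rlt_le, Rdiv_lt_0_compat; [apply lt_0_INR; lia | exact HNpos].
    + rewrite avg_active_succ by assumption.
      set (avg_next := grid_avg N n (fun g => midpoint_count N (in_weight k g v) / INR N)).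
      set (avg_in :=
        lsum (fun x => edge_weight x v * grid_avg N n (fun g => ind (active k g x))) (verts n)).
      assert (Hcount : Rabs (avg_next - avg_in) <= 1 / INR N).
      { unfold avg_next, avg_in. rewrite <- avg_in_weight.
        apply grid_avg_abs_diff_le; [exact N_pos|]. intros g.
        apply midpoint_count_approx; [exact N_pos | now apply in_weight_bounds]. }
      assert (Hin : Rabs (avg_in - activation_prob u (S k) v) <= INR k / INR N).
      { cbn [activation_prob]. destruct (Nat.eqb_spec v u); [congruence|].
        apply lsum_weighted_abs_diff_le.
        - intros x _. apply edge_weight_nonneg.
        - exact (in_weight_le_1 v Hv).
        - apply Rmult_le_pos; [apply pos_INR | left; now apply Rinv_0_lt_compat].
        - intros x Hx. apply IH. now apply in_verts. }
      rewrite S_INR. replace ((INR k + 1) / INR N) with (1 / INR N + INR k / INR N) by (field; lra).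
      replace (avg_next - activation_prob u (S k) v)
        with ((avg_next - avg_in) + (avg_in - activation_prob u (S k) v)) by ring.
      eapply Rle_trans; [apply Rabs_triang | lra].
Qed.

Lemma cube_riemann_spread_approx :
  Rabs (cube_riemann n N (lt_spread n E w (fun x => Nat.eqb x u))
        - lsum (fun v => if Nat.eqb v u then 0 else activation_prob u n v) (verts n))
  <= INR n * INR n / INR N.
Proof.
  change (cube_riemann n N (lt_spread n E w (fun x => Nat.eqb x u)))
    with (grid_avg N n (fun g =>
            lsum (fun v => ind (active n g v && negb (Nat.eqb v u))) (verts n))).
  rewrite grid_avg_lsum. eapply Rle_trans; [apply lsum_abs_diff|].
  apply Rle_trans with (lsum (fun _ => INR n / INR N) (verts n)).
  2: { rewrite lsum_const. unfold verts. rewrite length_seq. right. unfold Rdiv. ring. }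
  apply lsum_le. intros v Hv. apply in_verts in Hv.
  destruct (Nat.eqb_spec v u) as [->|Hvu].
  - rewrite (grid_avg_ext _ _ _ (fun _ => 0))
      by (intros g; unfold ind; now destruct (active n g u)).
    rewrite grid_avg_const, Rminus_diag, Rabs_R0 by exact N_pos.
    apply Rmult_le_pos; [apply pos_INR | left; apply Rinv_0_lt_compat, lt_0_INR, N_pos].
  - rewrite (grid_avg_ext _ _ _ (fun g => ind (active n g v)))
      by (intros g; unfold ind; now destruct (active n g v)).
    now apply avg_active_approx.
Qed.

End WeightedDag.

Lemma Un_cv_of_inv_bound (a : nat -> R) (l C : R) :
  (forall N, Rabs (a N - l) <= C / INR (S N)) -> Un_cv a l.
Proof.
  intros Hbound eps Heps.
  destruct (INR_unbounded (C / eps)) as [N0 HN0].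
  exists N0. intros N HN. unfold R_dist.
  assert (HSN : 0 < INR (S N)) by (apply lt_0_INR; lia).
  assert (HN0N : INR N0 <= INR (S N)) by (apply le_INR; lia).
  apply (Rle_lt_trans _ (C / INR (S N))); [apply Hbound|].
  apply Rmult_lt_reg_r with (INR (S N)); [exact HSN|].
  unfold Rdiv. rewrite Rmult_assoc, Rinv_l, Rmult_1_r by lra.
  apply Rmult_lt_compat_r with (r := eps) in HN0; [|exact Heps].
  unfold Rdiv in HN0. rewrite Rmult_assoc, Rinv_l, Rmult_1_r in HN0 by lra. nra.
Qed.

Theorem mainTheorem7 :
  forall (n : nat) (E : nat -> nat -> bool) (w : nat -> nat -> R) (L : nat),
    (forall x y, E x y = true -> (x < n)%nat /\ (y < n)%nat) ->
    (forall x y, E x y = true -> 0 <= w x y) ->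
    (forall v, (v < n)%nat ->
       lsum (fun x => if E x v then w x v else 0) (verts n) <= 1) ->
    acyclic E ->
    longest_path_length E L ->
    forall (l u : nat), (L <= l)%nat -> (u < n)%nat ->
      sigma_is n E w (fun x => Nat.eqb x u) (easyim n E w l u) /\
      easyim n E w l u = path_sum n E w L u.
Proof.
  intros n E w L HE Hw Hin Hac HL l u Hl Hu.
  assert (Heasy : easyim n E w l u = path_sum n E w L u) by (eapply easyim_eq_path_sum; eauto).
  split; [|exact Heasy].
  unfold sigma_is. rewrite Heasy, <- (nonseed_activation_prob_sum n E w HE Hac L u HL Hu).
  apply Un_cv_of_inv_bound with (C := INR n * INR n). intros N.
  apply cube_riemann_spread_approx; auto. lia.
Qed.
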